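(* For every program $P$, all terms $s,t$ and all $w\in P^*$, if $s\hookrightarrow_w t$ then $\langle s\rangle\leadsto_w\langle t\rangle$.
   Context: Fix a signature $\Sigma$ and a countably infinite set $X$ of variables disjoint from $\Sigma$; terms are elements of $T(\Sigma,X)$, goals are finite sequences $\langle s_1,\dots,s_n\rangle$ of terms, substitutions are maps $X\to T(\Sigma,X)$ moving finitely many variables, applied homomorphically to terms and elementwise to goals; $\mathit{Var}$ denotes the set of variables. A renaming is a substitution bijective on $X$; a variant is an image under a renaming; $\mathit{mgu}$ denotes a most general unifier. A program is a set of rules $(u,\bar v)$ with $u$ a term and $\bar v$ a goal. For a rule $r$: $\hookrightarrow_r=\{(u\theta,v\theta)\mid r=(u,\langle v\rangle),\ \mathit{Var}(v)\subseteq\mathit{Var}(u),\ \theta\text{ a substitution}\}$. For a goal $\bar s=\langle s_1,\dots,s_n\rangle$, $\bar s\leadsto_r\bar t$ iff for some $1\le i\le n$ and some variant $(u',\langle v_1,\dots,v_m\rangle)$ of $r$ variable-disjoint from $\bar s$, $s_i$ and $u'$ unify, $\eta=\mathit{mgu}(s_i,u')$, and $\bar t=\langle s_1,\dots,s_{i-1},v_1,\dots,v_m,s_{i+1},\dots,s_n\rangle\eta$. For $w=\langle r_1,\dots,r_n\rangle\in P^*$, $\hookrightarrow_w=\hookrightarrow_{r_1}\circ\cdots\circ\hookrightarrow_{r_n}$ and $\leadsto_w=\leadsto_{r_1}\circ\cdots\circ\leadsto_{r_n}$ (apply $r_1$ first), each being the identity relation when $w=\epsilon$. *)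

From Stdlib Require Import List Arith.
Import ListNotations.
Set Implicit Arguments.

(* Terms T(Sigma, X): function symbols of type F (applied to a list of
   arguments), variables X := nat (a countably infinite set, disjoint from F). *)
Inductive term (F : Type) : Type :=
| Var : nat -> term F
| Fun : F -> list (term F) -> term F.
Arguments Var {F} _.
Arguments Fun {F} _ _.

Definition goal (F : Type) := list (term F).

Fixpoint subst {F : Type} (s : nat -> term F) (t : term F) : term F :=
  match t with
  | Var x => s x
  | Fun f ts => Fun f (map (subst s) ts)
  end.

Definition subst_goal {F : Type} (s : nat -> term F) (g : goal F) : goal F :=
  map (subst s) g.

Fixpoint vars {F : Type} (t : term F) : list nat :=
  match t with
  | Var x => [x]
  | Fun _ ts => flat_map vars ts
  end.
Definition vars_goal {F : Type} (g : goal F) : list nat := flat_map vars g.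

Definition is_subst {F : Type} (s : nat -> term F) : Prop :=
  exists l : list nat, forall x, ~ In x l -> s x = Var x.

Definition is_renaming {F : Type} (r : nat -> term F) : Prop :=
  is_subst r /\
  exists p : nat -> nat,
    (forall x, r x = Var (p x)) /\
    (forall x y, p x = p y -> x = y) /\
    (forall y, exists x, p x = y).

Definition unifier {F : Type} (s : nat -> term F) (t1 t2 : term F) : Prop :=
  subst s t1 = subst s t2.

Definition is_mgu {F : Type} (eta : nat -> term F) (t1 t2 : term F) : Prop :=
  is_subst eta /\ unifier eta t1 t2 /\
  forall sigma, is_subst sigma -> unifier sigma t1 t2 ->
    exists delta, is_subst delta /\ forall x, sigma x = subst delta (eta x).

Definition rule (F : Type) := (term F * goal F)%type.
Definition program (F : Type) := rule F -> Prop.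

Definition hook_step {F : Type} (r : rule F) (s t : term F) : Prop :=
  exists (u v : term F) (theta : nat -> term F),
    r = (u, [v]) /\ incl (vars v) (vars u) /\ is_subst theta /\
    s = subst theta u /\ t = subst theta v.

Definition deriv_step {F : Type} (r : rule F) (sb tb : goal F) : Prop :=
  exists (i : nat) (rho eta : nat -> term F),
    i < length sb /\ is_renaming rho /\
    (forall x, In x (vars (subst rho (fst r)) ++ vars_goal (subst_goal rho (snd r))) ->
               ~ In x (vars_goal sb)) /\
    is_mgu eta (nth i sb (Var 0)) (subst rho (fst r)) /\
    tb = subst_goal eta (firstn i sb ++ subst_goal rho (snd r) ++ skipn (S i) sb).

Inductive along {F A : Type} (step : rule F -> A -> A -> Prop)
  : list (rule F) -> A -> A -> Prop :=
| along_nil : forall a, along step [] a a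
| along_cons : forall r w a b c,
    step r a b -> along step w b c -> along step (r :: w) a c.

Definition hook {F : Type} (w : list (rule F)) : term F -> term F -> Prop :=
  along hook_step w.
Definition deriv {F : Type} (w : list (rule F)) : goal F -> goal F -> Prop :=
  along deriv_step w.

(* A single step s = uθ ↪_r vθ = t is simulated by resolving ⟨s⟩ against a
   variant (ρu, ⟨ρv⟩) of r whose variables lie above all variables of u and
   s.  The matcher η = θ ∘ ρ⁻¹ on Var(ρu), identity elsewhere, sends ρu to s
   and fixes s; any unifier σ of s and ρu then agrees with σ ∘ η on Var(ρu),
   so η is an mgu, and the resolvent is ⟨ηρv⟩ = ⟨vθ⟩ because Var(v) ⊆ Var(u). *)
From Stdlib Require Import List Arith Lia.
Import ListNotations.

Lemma along_map (F A B : Type) (step1 : rule F -> A -> A -> Prop)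
    (step2 : rule F -> B -> B -> Prop) (f : A -> B) (w : list (rule F)) (a b : A) :
  (forall r a b, step1 r a b -> step2 r (f a) (f b)) ->
  along step1 w a b -> along step2 w (f a) (f b).
Proof.
  intros Hstep Hw; induction Hw; econstructor; eauto.
Qed.

Lemma lt_S_list_max (x : nat) (l : list nat) : In x l -> x < S (list_max l).
Proof.
  intros Hx; apply Nat.lt_succ_r.
  pose proof (proj1 (list_max_le l (list_max l)) (le_n _)) as Hle.
  rewrite Forall_forall in Hle; auto.
Qed.

Definition swap_blocks (N x : nat) : nat :=
  if x <? N then x + N else if x <? N + N then x - N else x.

Lemma swap_blocks_low (N x : nat) : x < N -> swap_blocks N x = x + N.
Proof. unfold swap_blocks; intros Hx; destruct (Nat.ltb_spec x N); lia. Qed.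

Lemma swap_blocks_high (N x : nat) : N + N <= x -> swap_blocks N x = x.
Proof.
  unfold swap_blocks; intros Hx.
  destruct (Nat.ltb_spec x N); [lia|]; destruct (Nat.ltb_spec x (N + N)); lia.
Qed.

Lemma swap_blocksK (N x : nat) : swap_blocks N (swap_blocks N x) = x.
Proof.
  unfold swap_blocks.
  destruct (Nat.ltb_spec x N); [|destruct (Nat.ltb_spec x (N + N))];
    repeat match goal with |- context [?a <? ?b] => destruct (Nat.ltb_spec a b) end;
    lia.
Qed.

Section Terms.
Variable F : Type.

Fixpoint term_nested_ind (P : term F -> Prop)
  (HV : forall x, P (Var x))
  (HF : forall f ts, Forall P ts -> P (Fun f ts)) (t : term F) : P t :=
  match t with
  | Var x => HV x
  | Fun f ts => HF f ts ((fix all_args (l : list (term F)) : Forall P l :=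
       match l with
       | [] => Forall_nil _
       | a :: l' => Forall_cons _ (term_nested_ind P HV HF a) (all_args l')
       end) ts)
  end.

Lemma subst_comp (s1 s2 : nat -> term F) (t : term F) :
  subst s2 (subst s1 t) = subst (fun x => subst s2 (s1 x)) t.
Proof.
  induction t as [x|f ts IH] using term_nested_ind; simpl; auto.
  rewrite map_map; f_equal; apply map_ext_in; intros a Ha.
  rewrite Forall_forall in IH; auto.
Qed.

Lemma subst_ext_in (s1 s2 : nat -> term F) (t : term F) :
  (forall x, In x (vars t) -> s1 x = s2 x) -> subst s1 t = subst s2 t.
Proof.
  induction t as [x|f ts IH] using term_nested_ind; simpl; intros H.
  - apply H; simpl; auto.
  - f_equal; apply map_ext_in; intros a Ha.
    rewrite Forall_forall in IH; apply IH; auto.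
    intros x Hx; apply H, in_flat_map; eauto.
Qed.

Lemma subst_ext_in_inv (s1 s2 : nat -> term F) (t : term F) :
  subst s1 t = subst s2 t -> forall x, In x (vars t) -> s1 x = s2 x.
Proof.
  induction t as [y|f ts IH] using term_nested_ind; simpl; intros H x Hx.
  - destruct Hx as [<-|[]]; auto.
  - injection H as Hargs; rewrite map_ext_in_iff in Hargs.
    apply in_flat_map in Hx; destruct Hx as [a [Ha Hx]].
    rewrite Forall_forall in IH; eauto.
Qed.

Lemma subst_Var (t : term F) : subst (@Var F) t = t.
Proof.
  induction t as [x|f ts IH] using term_nested_ind; simpl; auto.
  f_equal; rewrite <- (map_id ts) at 2; apply map_ext_in.
  rewrite Forall_forall in IH; auto.
Qed.

Lemma in_vars_subst (s : nat -> term F) (t : term F) (x : nat) :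
  In x (vars (subst s t)) <-> exists y, In y (vars t) /\ In x (vars (s y)).
Proof.
  induction t as [y|f ts IH] using term_nested_ind; simpl.
  - split; [eauto | intros (z & [<-|[]] & Hx); auto].
  - rewrite Forall_forall in IH; rewrite flat_map_concat_map, map_map,
      <- flat_map_concat_map, in_flat_map; split.
    + intros (a & Ha & Hx); apply IH in Hx as (y & Hy & Hx); auto.
      exists y; split; auto; apply in_flat_map; eauto.
    + intros (y & Hy & Hx); apply in_flat_map in Hy as (a & Ha & Hy).
      exists a; split; auto; apply IH; eauto.
Qed.

Lemma involution_is_renaming (p : nat -> nat) :
  (forall x, p (p x) = x) -> is_subst (fun x => @Var F (p x)) ->
  is_renaming (fun x => @Var F (p x)).
Proof.
  intros pK Hsub; split; auto; exists p; repeat split; auto.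
  - intros x y Hxy; rewrite <- (pK x), <- (pK y), Hxy; auto.
  - intros y; exists (p y); auto.
Qed.

Lemma swap_blocks_is_renaming (N : nat) :
  is_renaming (fun x => @Var F (swap_blocks N x)).
Proof.
  apply involution_is_renaming; [apply swap_blocksK|].
  exists (seq 0 (N + N)); intros x Hx; f_equal; apply swap_blocks_high.
  rewrite in_seq in Hx; lia.
Qed.

Lemma matcher_is_mgu (eta : nat -> term F) (s t : term F) :
  (forall x, ~ In x (vars t) -> eta x = Var x) ->
  (forall x, In x (vars s) -> ~ In x (vars t)) ->
  subst eta t = s -> is_mgu eta s t.
Proof.
  intros Hoff Hdisj Hmatch.
  assert (Hfix : subst eta s = s).
  { rewrite <- (subst_Var s) at 2; apply subst_ext_in; auto. }
  repeat split.
  - exists (vars t); auto.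
  - unfold unifier; rewrite Hfix; auto.
  - intros sigma Hsigma Hun; exists sigma; split; [exact Hsigma|]; intros x.
    destruct (in_dec Nat.eq_dec x (vars t)) as [Hx|Hx]; [|rewrite Hoff; auto].
    unfold unifier in Hun; rewrite <- Hmatch, subst_comp in Hun.
    exact (subst_ext_in_inv _ _ _ (eq_sym Hun) x Hx).
Qed.

Section ShiftedVariant.
Variables (u : term F) (theta : nat -> term F).
Let s : term F := subst theta u.
(* Variables of [u] and [s] lie below [M]; [rho] moves those of [u] to [M + x]. *)
Let M : nat := S (list_max (vars u ++ vars s)).
Let rho (x : nat) : term F := Var (swap_blocks M x).
Let eta (x : nat) : term F :=
  if in_dec Nat.eq_dec x (vars (subst rho u)) then theta (swap_blocks M x)
  else Var x.

Lemma shifted_fresh (t : term F) (x : nat) :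
  incl (vars t) (vars u) -> In x (vars (subst rho t)) -> ~ In x (vars s).
Proof.
  intros Htu Hx Hs; apply in_vars_subst in Hx as (y & Hy & [<-|[]]).
  assert (Hyu : y < M) by (apply lt_S_list_max, in_or_app; auto).
  assert (HsM : swap_blocks M y < M) by (apply lt_S_list_max, in_or_app; auto).
  rewrite swap_blocks_low in HsM; auto; lia.
Qed.

Lemma matcher_shifted (t : term F) :
  incl (vars t) (vars u) -> subst eta (subst rho t) = subst theta t.
Proof.
  intros Htu; rewrite subst_comp; apply subst_ext_in; intros y Hy; cbn.
  unfold eta; rewrite swap_blocksK; destruct in_dec as [|Hout]; auto.
  exfalso; apply Hout, in_vars_subst; exists y; split; [auto | left; auto].
Qed.

Lemma deriv_step_instance (v : term F) :
  incl (vars v) (vars u) -> deriv_step (u, [v]) [s] [subst theta v].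
Proof.
  intros Hvu; exists 0, rho, eta; cbn.
  split; [lia|]; split; [apply swap_blocks_is_renaming|]; split; [|split].
  - unfold vars_goal; cbn; rewrite ?app_nil_r; intros x Hx.
    apply in_app_or in Hx as [Hx|Hx];
      [apply (shifted_fresh u) | apply (shifted_fresh v)]; auto using incl_refl.
  - apply matcher_is_mgu.
    + intros x Hx; unfold eta; destruct in_dec; tauto.
    + intros x Hs Hx; apply (shifted_fresh u x); auto using incl_refl.
    + apply matcher_shifted, incl_refl.
  - unfold subst_goal; cbn; rewrite matcher_shifted; auto.
Qed.

End ShiftedVariant.

Lemma hook_step_deriv_step (r : rule F) (s t : term F) :
  hook_step r s t -> deriv_step r [s] [t].
Proof.
  intros (u & v & theta & -> & Hvu & _ & -> & ->); apply deriv_step_instance; auto.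
Qed.

End Terms.

(* The rules of [w] need not belong to [P]. *)
Theorem lemma8 (F : Type) (P : program F) (s t : term F) (w : list (rule F)) :
  Forall P w -> hook w s t -> deriv w [s] [t].
Proof.
  intros _; apply (along_map _ _ _ _ _ (fun x : term F => [x])), hook_step_deriv_step.
Qed.
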